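(* Let $w\in\Sigma^*$ with $\iota(w)\ge 2$ and let $u$ be a nonempty scattered factor of $w$ with $|u|<\iota(w)$. If $u[1]\neq\operatorname{m}(w)[1]$, then $|C(w,u)|>1$.
   Context: The alphabet $\Sigma$ is exactly the set of letters occurring in $w$, with $|\Sigma|\ge2$. The universality index $\iota(w)$ is the largest $k$ such that every word in $\Sigma^k$ is a scattered factor (subsequence) of $w$. The arch factorisation of $w$ is $w=\operatorname{ar}_1(w)\cdots\operatorname{ar}_k(w)\operatorname{r}(w)$ where each arch contains every letter of $\Sigma$ and its last letter does not occur elsewhere in it, and $\operatorname{r}(w)$ does not contain all letters of $\Sigma$; then $k=\iota(w)$. The modus $\operatorname{m}(w)$ is the word of last letters of the arches in order. An embedding of $u$ in $w$ is a map $e:\{1,\dots,|u|\}\to\{1,\dots,|w|\}$ with $e(1)<\dots<e(|u|)$ and $u[i]=w[e(i)]$. The shuffle $\mathrm{Sh}(u,v)$ is the set of words of length $|u|+|v|$ admitting an embedding of $u$ and one of $v$ with disjoint images covering all positions, and $C(w,u)=\{v\in\Sigma^{|w|-|u|}: w\in\mathrm{Sh}(u,v)\}$. *)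

From mathcomp Require Import all_boot.
Set Implicit Arguments. Unset Strict Implicit. Unset Printing Implicit Defensive.

(* Words over an alphabet with decidable equality: w : seq T.
   The alphabet Sigma of w is the set of letters occurring in w (undup w). *)

Definition k_universal (T : eqType) (k : nat) (w : seq T) : Prop :=
  forall v : seq T, size v = k -> all (fun a => a \in w) v -> subseq v w.

Definition is_iota (T : eqType) (w : seq T) (k : nat) : Prop :=
  k_universal k w /\ forall k', k_universal k' w -> k' <= k.

(* Greedy arch factorisation w.r.t. the alphabet S: each arch is the shortest
   prefix of the remaining word containing all letters of S. *)
Fixpoint archs (T : eqType) (S : seq T) (fuel : nat) (w : seq T) : seq (seq T) :=
  match fuel with
  | 0 => [::]
  | f.+1 =>
      let i := find (fun n => all (fun c => c \in take n w) S) (iota 1 (size w)) in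
      if i < size w then take i.+1 w :: archs S f (drop i.+1 w) else [::]
  end.

Definition arches (T : eqType) (w : seq T) : seq (seq T) := archs (undup w) (size w) w.

Definition modus (T : eqType) (w : seq T) : seq T :=
  pmap (fun a => if a is x :: a' then Some (last x a') else None) (arches w).

(* w in Sh(u,v): two embeddings with disjoint images covering all positions,
   encoded by the bitmask of positions of the embedding of u. *)
Definition in_shuffle (T : eqType) (w u v : seq T) : Prop :=
  exists m : bitseq, size m = size w /\ mask m w = u /\ mask (map negb m) w = v.

Definition inC (T : eqType) (w u v : seq T) : Prop :=
  size v = size w - size u /\ in_shuffle w u v.

From mathcomp Require Import all_boot.

Set Implicit Arguments.
Unset Strict Implicit.
Unset Printing Implicit Defensive.

(* Let [x ++ [:: b]] be the first arch of [w = x ++ b :: y]: [b] does not occur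
   in [x], while [x] contains every other letter, in particular [a = u[1]].
   As [|u| < iota(w)], the word [b :: u] is a scattered factor of [w]; since the
   first [b] of [w] closes the first arch, [u] embeds in [y].  Embedding all of
   [u] in [y], or taking its first letter from an [a] in [x] and the rest from
   [y], leaves complements whose first [b] sits at different positions. *)

Section Shuffle.
Variable T : eqType.
Implicit Types (a : T) (u v w x : seq T).

Lemma in_shuffle_consl a w u v : in_shuffle w u v -> in_shuffle (a :: w) (a :: u) v.
Proof. by case=> m [Em [Eu Ev]]; exists (true :: m); rewrite /= Em Eu Ev. Qed.

Lemma in_shuffle_consr a w u v : in_shuffle w u v -> in_shuffle (a :: w) u (a :: v).
Proof. by case=> m [Em [Eu Ev]]; exists (false :: m); rewrite /= Em Eu Ev. Qed.

Lemma in_shuffle_catl x w u v : in_shuffle w u v -> in_shuffle (x ++ w) u (x ++ v).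
Proof. by elim: x => //= a x IHx /IHx /in_shuffle_consr. Qed.

Lemma subseq_in_shuffle u w : subseq u w -> exists v, in_shuffle w u v.
Proof. by case/subseqP=> m Em ->; exists (mask (map negb m) w), m. Qed.

Lemma in_shuffle_inC w u v : in_shuffle w u v -> inC w u v.
Proof.
move=> shuf; split=> //; case: shuf => m [Em [<- <-]].
by rewrite !size_mask ?size_map // count_map -Em -(count_predC id m) addKn.
Qed.

End Shuffle.

Lemma subseq_cons_cat_notin (T : eqType) (b : T) v x y :
  b \notin x -> subseq (b :: v) (x ++ b :: y) -> subseq v y.
Proof.
elim: x => [|c x IHx] /=; first by rewrite eqxx.
by rewrite inE negb_or => /andP[/negbTE-> /IHx].
Qed.

Lemma k_universal_leq (T : eqType) (j k : nat) (w : seq T) :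
  j <= k -> k_universal k w -> k_universal j w.
Proof.
move=> le_jk univ [|c v] Ev v_w; first exact: sub0seq.
apply: subseq_trans (prefix_subseq _ (nseq (k - j) c)) (univ _ _ _).
  by rewrite size_cat size_nseq Ev subnKC.
rewrite all_cat v_w; apply/allP=> _ /nseqP[-> _].
by move/allP: v_w; apply; rewrite mem_head.
Qed.

Lemma first_arch (T : eqType) (w : seq T) : w != [::] ->
  exists x b y, [/\ w = x ++ b :: y, b \notin x, {subset w <= b :: x}
                  & ohead (modus w) = Some b].
Proof.
case: w => // c w' _; set w := c :: w'.
pose P n := all (fun d => d \in take n w) (undup w).
pose i := find P (iota 1 (size w)).
have P_size : P (size w) by rewrite /P take_size; apply/allP=> d; rewrite mem_undup.
have i_lt : i < size w.
  rewrite -[X in _ < X](size_iota 1) -has_find; apply/hasP.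
  by exists (size w); rewrite // mem_iota add1n ltnSn.
have P_i1 : P i.+1.
  by rewrite -[i.+1]add1n -(nth_iota 0 _ i_lt); apply: nth_find; rewrite has_find size_iota.
set b := nth c w i.
have take_i1 : take i.+1 w = rcons (take i w) b := take_nth c i_lt.
exists (take i w), b, (drop i.+1 w); split.
- by rewrite -drop_nth // cat_take_drop.
- apply/negP=> b_x.
  have i_gt0 : 0 < i.
    by apply: contraTT b_x; rewrite lt0n negbK => /eqP->; rewrite take0.
  have : P (nth 0 (iota 1 (size w)) i.-1) = false by apply: before_find; rewrite prednK.
  rewrite nth_iota ?add1n ?prednK ?(ltnW i_lt) // => /negbT/negP; apply.
  apply/allP=> d /(allP P_i1); rewrite take_i1 mem_rcons inE.
  by case/predU1P=> [->|].
- move=> d; rewrite -mem_undup => /(allP P_i1).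
  by rewrite take_i1 mem_rcons.
- have arches_w : arches w = take i.+1 w :: archs (undup w) (size w') (drop i.+1 w).
    change (arches w) with
      (if i < size w then take i.+1 w :: archs (undup w) (size w') (drop i.+1 w) else [::]).
    by rewrite i_lt.
  rewrite /modus arches_w take_i1.
  by case: (take i w) => [|e s] //=; rewrite last_rcons.
Qed.

Lemma index_cat_notin (T : eqType) (b : T) s t :
  b \notin s -> index b (s ++ b :: t) = size s.
Proof. by move=> b_s; rewrite index_cat (negbTE b_s) index_head addn0. Qed.

Lemma two_shuffles_differ (T : eqType) (a b : T) x y u :
  b \notin x -> a \in x -> subseq (a :: u) y ->
  exists v1 v2, [/\ in_shuffle (x ++ b :: y) (a :: u) v1,
                    in_shuffle (x ++ b :: y) (a :: u) v2 & v1 <> v2].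
Proof.
move=> + a_x au_y; case/splitPr: a_x => x1 x2 b_x.
have [v1 sh1] := subseq_in_shuffle au_y.
have [v2 sh2] := subseq_in_shuffle (subseq_trans (subseq_cons u a) au_y).
exists ((x1 ++ a :: x2) ++ b :: v1), ((x1 ++ x2) ++ b :: v2); split.
- exact/in_shuffle_catl/in_shuffle_consr.
- rewrite -!catA; exact/in_shuffle_catl/in_shuffle_consl/in_shuffle_catl/in_shuffle_consr.
- have b_x12 : b \notin x1 ++ x2.
    by apply: contra b_x; rewrite !mem_cat inE => /orP[->|->]; rewrite ?orbT.
  move/(congr1 (index b)); rewrite !index_cat_notin // !size_cat /= addnS.
  by move/eqP; rewrite eqn_leq ltnn.
Qed.

Theorem lemma24 (T : eqType) (w u : seq T) (k : nat) :
  2 <= size (undup w) ->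
  is_iota w k ->
  2 <= k ->
  u != [::] ->
  subseq u w ->
  size u < k ->
  ohead u <> ohead (modus w) ->
  exists v1 v2 : seq T, inC w u v1 /\ inC w u v2 /\ v1 <> v2.
Proof.
move=> _ [univ _] _; case: u => // a u _ u_w u_lt head_neq.
have a_w : a \in w := mem_subseq u_w (mem_head a u).
have w_nil : w != [::] by apply: contraTneq a_w => ->.
have [x [b [y [Ew b_x w_bx modus_b]]]] := first_arch w_nil.
have a_neq_b : a != b by apply/eqP=> ab; apply: head_neq; rewrite modus_b ab.
have a_x : a \in x by move: (w_bx a a_w); rewrite inE (negbTE a_neq_b).
have bau_w : subseq (b :: a :: u) w.
  apply: (k_universal_leq u_lt univ) => //; apply/allP=> c.
  case/predU1P=> [->|/(mem_subseq u_w)//]; by rewrite Ew mem_cat mem_head orbT.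
have au_y : subseq (a :: u) y by move: bau_w; rewrite Ew; exact: subseq_cons_cat_notin.
have [v1 [v2 [sh1 sh2 v12]]] := two_shuffles_differ b_x a_x au_y.
by exists v1, v2; rewrite Ew; split; [|split] => //; exact: in_shuffle_inC.
Qed.
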